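(* Let $\mathbb{K}$ be either $\mathbb{R}$ or $\mathbb{C}$, with all coefficients and solutions in $\mathbb{K}$. Let $D$ be a positive integer and let $1 \le D < q \le \infty$. For all $k\in\{1,\dots,D\}$ let $\mathcal{D}_k = \{(d_1,\dots,d_k)\in\mathbb{N}^k : d_1+\cdots+d_k\le D\}$. Let $I$ be an infinite set and $\mathbf{x} = (x_j)_{j=1}^\infty$. For all $i\in I$ and $d\in\{1,\dots,D\}$ let $\mathbf{a}_{i,d} = (a_{i,d,j})_{j=1}^\infty \in \ell^{q/(q-d)}$ and $(\mathbf{a}_{i,d},\mathbf{x}^d) = \sum_{j=1}^\infty a_{i,d,j} x_j^d$. For all $i\in I$ define the multiplicative polynomial \[ P_i(\mathbf{x}) = \sum_{k=1}^{D}\sum_{(d_1,\dots,d_k)\in\mathcal{D}_k} (\mathbf{a}_{i,d_1},\mathbf{x}^{d_1})(\mathbf{a}_{i,d_2},\mathbf{x}^{d_2})\cdots(\mathbf{a}_{i,d_k},\mathbf{x}^{d_k}) \] (equivalently $\sum_{k=1}^D\sum_{\Delta\in\mathcal{D}_k}\sum_{J\in\mathbb{N}^k} a_{i,\Delta,J}x_J^\Delta$ with multiplicative coefficients $a_{i,(d_1,\dots,d_k),(j_1,\dots,j_k)} = a_{i,d_1,j_1}\cdots a_{i,d_k,j_k}$ and $x_J^\Delta = x_{j_1}^{d_1}\cdots x_{j_k}^{d_k}$). Let $M>0$ and $\mathbf{b} = (b_i)_{i\in I}$ with $b_i\in\mathbb{K}$. If for every $\varepsilon>0$ and every finite subset $S$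 of $I$ the finite set of inequalities $\{|P_i(\mathbf{x}) - b_i| \le \varepsilon : i\in S\}$ has a solution $\mathbf{x}_{S,\varepsilon}\in\ell^q$ with $\|\mathbf{x}_{S,\varepsilon}\|_q\le M$, then the infinite set of equations $\{P_i(\mathbf{x}) = b_i : i\in I\}$ has an exact solution $\mathbf{x}\in\ell^q$ with $\|\mathbf{x}\|_q\le M$.
   Context: $\mathbb{N}=\{1,2,3,\dots\}$. For $q=\infty$ one sets $q/(q-d)=1$ and $q/d=\infty$. $\ell^p$ ($1\le p<\infty$) denotes sequences with $\|\mathbf{a}\|_p=(\sum_j|a_j|^p)^{1/p}<\infty$ and $\ell^\infty$ bounded sequences with the sup norm; $\mathbf{x}^d=(x_j^d)_{j\ge1}$. For $\mathbf{x}\in\ell^q$ each series $(\mathbf{a}_{i,d},\mathbf{x}^d)$ converges absolutely by Hölder's inequality. *)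

From HB Require Import structures.
From mathcomp Require Import all_boot all_order all_algebra.
From mathcomp Require Import all_classical all_reals all_analysis.
From mathcomp Require Import complex.
Set Implicit Arguments. Unset Strict Implicit. Unset Printing Implicit Defensive.
Import Order.TTheory GRing.Theory Num.Theory.
Import numFieldNormedType.Exports.
Local Open Scope ring_scope.
Local Open Scope classical_set_scope.

(* R : realType plays the role of the
   real numbers; the field K of coefficients is either R itself or the complex
   numbers R[i] (from mathcomp-real-closed).  absK : K -> R is the modulus. *)

Section Defs.
Variables (R : realType) (K : numFieldType) (absK : K -> R).

Definition Kseries_to (u : nat -> K) (l : K) : Prop :=
  forall e : R, 0 < e -> exists N : nat, forall n : nat, (N <= n)%N ->
    absK (\sum_(j < n) u j - l) < e.

Definition Ksum (u : nat -> K) : K := xget 0 (Kseries_to u).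

Definition lp_mem (p : \bar R) (x : nat -> K) : Prop :=
  match p with
  | r%:E => cvgn (series (fun j => absK (x j) `^ r))
  | +oo%E => exists B : R, forall j, absK (x j) <= B
  | -oo%E => False
  end.

Definition lp_norm (p : \bar R) (x : nat -> K) : R :=
  match p with
  | r%:E => (limn (series (fun j => absK (x j) `^ r))) `^ r^-1
  | +oo%E => sup (range (fun j => absK (x j)))
  | -oo%E => 0
  end.

(* the exponent q/(q-d), with the convention q/(q-d) = 1 for q = +oo *)
Definition dual_exp (q : \bar R) (d : nat) : \bar R :=
  match q with
  | r%:E => (r / (r - d%:R))%:E
  | +oo%E => 1%:E
  | -oo%E => -oo%E
  end.

Definition pairing (a : nat -> K) (x : nat -> K) (d : nat) : K :=
  Ksum (fun j => a j * x j ^+ d).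

Definition mult_poly (D : nat) (a : nat -> nat -> K) (x : nat -> K) : K :=
  \sum_(1 <= k < D.+1)
    \sum_(t : {ffun 'I_k -> 'I_D.+1} |
            [forall l, (0 < t l)%N] && (\sum_(l < k) (t l : nat) <= D)%N)
      \prod_(l < k) pairing (a (t l)) x (t l).

Definition theorem4_stmt : Prop :=
  forall (D : nat) (q : \bar R) (I : Type)
         (a : I -> nat -> nat -> K) (b : I -> K) (M : R),
    (1 <= D)%N -> (D%:R%:E < q)%E ->
    infinite_set [set: I] ->
    (forall i d, (1 <= d <= D)%N -> lp_mem (dual_exp q d) (a i d)) ->
    0 < M ->
    (forall (eps : R) (S : set I), 0 < eps -> finite_set S ->
       exists x : nat -> K, lp_mem q x /\ lp_norm q x <= M /\
         forall i, S i -> absK (mult_poly D (a i) x - b i) <= eps) ->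
    exists x : nat -> K, lp_mem q x /\ lp_norm q x <= M /\
      forall i, mult_poly D (a i) x = b i.
End Defs.

(* Compactness.  Encode a sequence in K by its real coordinates, i.e. by a point of
   R^(N x 2) with the product topology.  The sets of approximate solutions
     { x : ||x||_q <= M, |P_i(x) - b_i| <= e for i in S }     (S finite, e > 0)
   form a proper filter base inside the Tychonoff cube [-M, M]^(N x 2), hence have
   a cluster point x.  The ball ||x||_q <= M is closed for the product topology,
   and every P_i is continuous on it: by Young's inequality with exponents
   q/(q-d) and q/d the tails sum_(j >= N) |a_j| |x_j|^d are uniformly small on the
   ball, so the pairing (a, x^d) is a uniform limit of finite sums, each depending
   on finitely many coordinates only.  Hence the cluster point solves every
   equation exactly. *)

From HB Require Import structures.
From mathcomp Require Import all_boot all_order all_algebra.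
From mathcomp Require Import all_classical all_reals all_analysis.
From mathcomp Require Import complex.
From mathcomp Require Import ring lra.

Set Implicit Arguments.
Unset Strict Implicit.
Unset Printing Implicit Defensive.
Import Order.TTheory GRing.Theory Num.Theory.
Import numFieldNormedType.Exports.
Local Open Scope ring_scope.

Definition Kseries_cauchy (R : realType) (K : numFieldType) (absK : K -> R)
    (u : nat -> K) : Prop :=
  forall e, 0 < e -> exists N, forall n m, (N <= n)%N -> absK (\sum_(n <= j < m) u j) <= e.

Section RealSeries.
Context {R : realType}.
Implicit Types (f u : nat -> R).

Lemma series_nondecreasing f : (forall j, 0 <= f j) ->
  {homo series f : n m / (n <= m)%N >-> n <= m}.
Proof.
move=> f0 n m nm; rewrite seriesEnat /=.
exact: (@nondecreasing_series R f predT 0 (fun j _ _ => f0 j) n m nm).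
Qed.

Lemma sum_le_limn_series f n : (forall j, 0 <= f j) -> cvgn (series f) ->
  \sum_(j < n) f j <= limn (series f).
Proof.
move=> f0 cf; have -> : \sum_(j < n) f j = series f n by rewrite seriesEord.
exact: nondecreasing_cvgn_le (series_nondecreasing f0) cf n.
Qed.

Lemma limn_series_ge0 f : (forall j, 0 <= f j) -> cvgn (series f) ->
  0 <= limn (series f).
Proof. by move=> f0 cf; have := sum_le_limn_series 0 f0 cf; rewrite big_ord0. Qed.

Lemma sum_nat_le_sum_ord f n m : (forall j, 0 <= f j) ->
  \sum_(n <= j < m) f j <= \sum_(j < m) f j.
Proof.
move=> f0; have [mn|nm] := leqP m n.
  by rewrite big_geq //; apply: sumr_ge0.
rewrite -(big_mkord xpredT) (@big_cat_nat _ _ _ n 0 m) //= ?lerDr ?(ltnW nm) //.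
exact: sumr_ge0.
Qed.

Lemma series_tail_le f : (forall j, 0 <= f j) -> cvgn (series f) ->
  forall e, 0 < e -> exists N, forall n m, (N <= n)%N -> \sum_(n <= j < m) f j <= e.
Proof.
move=> f0 cf e e0; have [N _ hN] := cvgr_dist_lt _ _ cf _ e0.
exists N => n m Nn; have [mn|nm] := leqP m n; first by rewrite big_geq // ltW.
have fnd := series_nondecreasing f0.
have le_lim k : series f k <= limn (series f) by exact: nondecreasing_cvgn_le fnd cf k.
rewrite -sub_series_geq ?(ltnW nm) //; apply/ltW/(le_lt_trans _ (hN n Nn)).
have snm : series f n <= series f m by apply: fnd; exact: ltnW.
by rewrite ger0_norm ?subr_ge0 // lerD2r.
Qed.

Lemma real_series_cauchy_cvg u :
  Kseries_cauchy (fun x : R => `|x|) u -> exists l, Kseries_to (fun x : R => `|x|) u l.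
Proof.
move=> H; have hc : cvgn (series u).
  apply/cauchy_cvgP/cauchy_seriesP => e e0.
  have [N hN] := H (e / 2) (divr_gt0 e0 (ltr0n _ 2)).
  exists ([set n | (N <= n)%N]%classic, [set n | (N <= n)%N]%classic).
    by split; exists N.
  move=> [n m] /= [Nn _]; apply: le_lt_trans (hN n m Nn) _.
  by rewrite ltr_pdivrMr // ltr_pMr // ltr1n.
exists (limn (series u)) => e e0; have [N _ hN] := cvgr_dist_lt _ _ hc _ e0.
by exists N => n Nn; rewrite distrC; have := hN n Nn; rewrite /= seriesEord.
Qed.

End RealSeries.

Section Powers.
Context {R : realType}.
Implicit Types (r x : R).

Lemma powRVK r x : 0 < r -> 0 <= x -> (x `^ r^-1) `^ r = x.
Proof. by move=> r0 x0; rewrite -powRrM mulVf ?gt_eqF // powRr1. Qed.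

Lemma powRKV r x : 0 < r -> 0 <= x -> (x `^ r) `^ r^-1 = x.
Proof. by move=> r0 x0; rewrite -powRrM mulfV ?gt_eqF // powRr1. Qed.

Lemma powR_close r c e : 0 < r -> 0 <= c -> 0 < e ->
  exists eta, 0 < eta /\ forall s, 0 <= s -> `|s - c| < eta -> `|s `^ r - c `^ r| < e.
Proof.
move=> r0; rewrite le_eqVlt => /orP[/eqP <-|c0] e0.
  exists (e `^ r^-1); split; first exact: powR_gt0.
  move=> s s0; rewrite subr0 ger0_norm // => hs.
  rewrite powR0 ?gt_eqF // subr0 ger0_norm ?powR_ge0 // -(powRVK r0 (ltW e0)).
  by apply: gt0_ltr_powR; rewrite ?nnegrE ?powR_ge0.
have cont : {for c, continuous (expR \o (fun s : R => r * ln s))}.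
  apply: continuous_comp; last exact: continuous_expR.
  by apply: cvgM; [exact: cvg_cst | exact: continuous_ln].
set g := expR \o _ in cont.
have : \forall s \near c, `|g c - g s| < e by exact: cvgr_dist_lt _ _ cont _ e0.
move=> /nbhs_ballP[eta /= eta0 heta].
exists (Order.min eta c); split; first by rewrite lt_min eta0 c0.
move=> s s0; rewrite lt_min => /andP[hs1 hs2].
have sp : 0 < s by move: hs2; rewrite ltr_distlC => /andP[_]; lra.
by rewrite /powR !gt_eqF // distrC; apply: heta; rewrite /ball /= distrC.
Qed.

Lemma young_scaled s p l x y : 0 < s -> 0 < p -> s^-1 + p^-1 = 1 -> 0 < l ->
  0 <= x -> 0 <= y -> x * y <= l^-1 `^ s / s * x `^ s + l `^ p / p * y `^ p.
Proof.
move=> s0 p0 sp l0 x0 y0.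
have -> : x * y = x / l * (l * y) by field; rewrite gt_eqF.
have -> : l^-1 `^ s / s * x `^ s + l `^ p / p * y `^ p =
    (x / l) `^ s / s + (l * y) `^ p / p.
  by rewrite !powRM ?invr_ge0 ?(ltW l0) //; ring.
by apply: conjugate_powR; rewrite ?divr_ge0 ?mulr_ge0 ?(ltW l0).
Qed.

End Powers.

Lemma morph_sum (U V : zmodType) (c : U -> V) : {morph c : x y / x + y} ->
  forall (I : Type) (r : seq I) (P : pred I) (F : I -> U),
  c (\sum_(i <- r | P i) F i) = \sum_(i <- r | P i) c (F i).
Proof.
move=> cD; have c0 : c 0 = 0 by apply: (addrI (c 0)); rewrite -cD !addr0.
exact: big_morph cD c0.
Qed.

Lemma lte_natr_gt0 (R : realType) (n : nat) (q : \bar R) : (n%:R%:E < q)%E -> (0 < q)%E.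
Proof. by apply: le_lt_trans; rewrite lee_fin. Qed.

Section AbsoluteValue.
Variables (R : realType) (K : numFieldType) (absK : K -> R).
Hypothesis absK0 : absK 0 = 0.
Hypothesis absK_eq0 : forall x, absK x = 0 -> x = 0.
Hypothesis absKD : forall x y, absK (x + y) <= absK x + absK y.
Hypothesis absKM : forall x y, absK (x * y) = absK x * absK y.
Hypothesis absKN : forall x, absK (- x) = absK x.

Lemma absK_ge0 x : 0 <= absK x.
Proof. by have := absKD x (- x); rewrite subrr absK0 absKN; lra. Qed.

Lemma absKB x y : absK (x - y) <= absK x + absK y.
Proof. by rewrite -(absKN y) absKD. Qed.

Lemma absK_distC x y : absK (x - y) = absK (y - x).
Proof. by rewrite -absKN opprB. Qed.

Lemma ler_dist_absK x y : `|absK x - absK y| <= absK (x - y).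
Proof.
have hx := absKD (x - y) y; have hy := absKD (y - x) x.
rewrite subrK in hx; rewrite subrK absK_distC in hy.
by rewrite ler_norml; apply/andP; split; lra.
Qed.

Lemma absK1 : absK 1 = 1.
Proof.
have nz : absK 1 != 0 by apply/eqP => /absK_eq0/eqP; rewrite oner_eq0.
by apply: (mulfI nz); rewrite mulr1 -absKM mulr1.
Qed.

Lemma absKX x n : absK (x ^+ n) = absK x ^+ n.
Proof. by elim: n => [|n IH]; rewrite ?absK1 // !exprS absKM IH. Qed.

Lemma absK_sum (I : Type) (r : seq I) (P : pred I) (F : I -> K) :
  absK (\sum_(i <- r | P i) F i) <= \sum_(i <- r | P i) absK (F i).
Proof.
elim: r => [|i r IH]; first by rewrite !big_nil absK0.
rewrite !big_cons; case: (P i) => //.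
by apply: le_trans (absKD _ _) _; rewrite lerD2l.
Qed.

Lemma absK_subX x y n C : absK x <= C -> absK y <= C ->
  absK (y ^+ n - x ^+ n) <= n%:R * C ^+ n.-1 * absK (y - x).
Proof.
move=> hx hy; have C0 : 0 <= C := le_trans (absK_ge0 x) hx.
rewrite subrXX absKM mulrC; apply: ler_wpM2r; first exact: absK_ge0.
apply: le_trans (absK_sum _ _ _) _.
have term_le (i : 'I_n) : absK (y ^+ (n.-1 - i) * x ^+ i) <= C ^+ n.-1.
  have le_i : (i <= n.-1)%N by rewrite -ltnS prednK ?ltn_ord // (leq_ltn_trans _ (ltn_ord i)).
  rewrite absKM !absKX -{2}(subnK le_i) exprD.
  by apply: ler_pM; rewrite ?exprn_ge0 ?absK_ge0 // lerXn2r ?nnegrE ?absK_ge0.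
apply: le_trans (ler_sum _ (fun i _ => term_le i)) _.
by rewrite sumr_const card_ord mulr_natl.
Qed.

Definition lp_ball (q : \bar R) (M : R) (y : nat -> K) : Prop :=
  match q with
  | r%:E => forall n, \sum_(j < n) absK (y j) `^ r <= M `^ r
  | +oo%E => forall j, absK (y j) <= M
  | -oo%E => False
  end.

Section LpBall.
Variables (q : \bar R) (M : R).
Hypotheses (q_gt0 : (0 < q)%E) (M_gt0 : 0 < M).

Lemma lp_ball_lp_norm y :
  lp_mem absK q y -> lp_norm absK q y <= M -> lp_ball q M y.
Proof.
case: q q_gt0 => [r||] //=; rewrite ?lte_fin => r0; last first.
  move=> [B hB] hn j; apply: le_trans hn.
  by apply: ub_le_sup; [exists B => _ [k _ <-]; exact: hB | exists j].
set f := fun j => absK (y j) `^ r => cf hn n.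
have f0 j : 0 <= f j by exact: powR_ge0.
apply: le_trans (sum_le_limn_series n f0 cf) _.
rewrite -(powRVK r0 (limn_series_ge0 f0 cf)).
by apply: ge0_ler_powR; rewrite ?nnegrE ?powR_ge0 ?(ltW r0) ?(ltW M_gt0).
Qed.

Lemma lp_ballP y : lp_ball q M y -> lp_mem absK q y /\ lp_norm absK q y <= M.
Proof.
case: q q_gt0 => [r||] //=; rewrite ?lte_fin => r0; last first.
  move=> hb; split; first by exists M.
  apply: ge_sup; first by exists (absK (y 0%N)), 0%N.
  by move=> _ [j _ <-]; exact: hb.
set f := fun j => absK (y j) `^ r => hb.
have f0 j : 0 <= f j by exact: powR_ge0.
have cf : cvgn (series f).
  apply: nondecreasing_is_cvgn; first exact: series_nondecreasing.
  by exists (M `^ r) => _ [n _ <-]; rewrite seriesEord; exact: hb.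
split=> //; have : limn (series f) <= M `^ r.
  by apply: limr_le => //; apply: nearW => n; rewrite seriesEord; exact: hb.
move=> hL; rewrite -(powRKV r0 (ltW M_gt0)).
by apply: ge0_ler_powR; rewrite ?nnegrE ?powR_ge0 ?invr_ge0 ?(ltW r0) ?limn_series_ge0.
Qed.

Lemma lp_ball_le y j : lp_ball q M y -> absK (y j) <= M.
Proof.
case: q q_gt0 => [r||] //=; rewrite ?lte_fin => r0 // hb.
have h : absK (y j) `^ r <= M `^ r.
  apply: le_trans (hb j.+1); rewrite big_ord_recr /= lerDr.
  by apply: sumr_ge0 => i _; exact: powR_ge0.
rewrite -(powRKV r0 (absK_ge0 (y j))) -(powRKV r0 (ltW M_gt0)).
by apply: ge0_ler_powR; rewrite ?nnegrE ?powR_ge0 ?invr_ge0 ?(ltW r0).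
Qed.

End LpBall.

Definition small_tails (q : \bar R) (M : R) (d : nat) (a : nat -> K) : Prop :=
  forall e, 0 < e -> exists N, forall y, lp_ball q M y -> forall n m, (N <= n)%N ->
    \sum_(n <= j < m) absK (a j) * absK (y j) ^+ d <= e.

Lemma small_tails_pinfty M d (a : nat -> K) : 0 < M ->
  lp_mem absK (dual_exp +oo%E d) a -> small_tails +oo%E M d a.
Proof.
move=> M0 ha e e0; set f := fun j => absK (a j) `^ 1.
have f0 j : 0 <= f j by exact: powR_ge0.
have Md0 : 0 < M ^+ d by exact: exprn_gt0.
have [N hN] := series_tail_le f0 ha (divr_gt0 e0 Md0).
exists N => y hy n m Nn.
apply: (@le_trans _ _ (\sum_(n <= j < m) f j * M ^+ d)).
  apply: ler_sum => j _; rewrite /f powRr1 ?absK_ge0 //.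
  by apply/ler_wpM2l/lerXn2r; rewrite ?nnegrE ?absK_ge0 ?(ltW M0) ?hy.
by rewrite -mulr_suml -ler_pdivlMr //; exact: hN.
Qed.

Lemma small_tails_fin (r M : R) d (a : nat -> K) : 0 < M -> (0 < d)%N -> d%:R < r ->
  lp_mem absK (dual_exp r%:E d) a -> small_tails r%:E M d a.
Proof.
move=> M0 d0 dr ha e e0.
have d_gt0 : 0 < d%:R :> R by rewrite ltr0n.
have r0 : 0 < r := lt_trans d_gt0 dr.
have rd0 : 0 < r - d%:R by rewrite subr_gt0.
set s := r / (r - d%:R); set p := r / d%:R.
have s0 : 0 < s by exact: divr_gt0.
have p0 : 0 < p by exact: divr_gt0.
have sp : s^-1 + p^-1 = 1 by rewrite !invf_div; field; exact: lt0r_neq0.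
have Mr0 : 0 < M `^ r by exact: powR_gt0.
(* the weight [l] is chosen so that the [y]-part of Young's bound is [e / 2] *)
set l := (p * e / (2 * M `^ r)) `^ p^-1.
have l0 : 0 < l by apply/powR_gt0/divr_gt0; exact: mulr_gt0.
have lM : l `^ p / p * M `^ r = e / 2.
  have base0 : 0 <= p * e / (2 * M `^ r).
    by apply/ltW/divr_gt0; apply: mulr_gt0 => //; rewrite ltr0n.
  by rewrite powRVK //; field; rewrite !gt_eqF.
set c := l^-1 `^ s / s.
have c0 : 0 < c by apply: divr_gt0 => //; apply/powR_gt0; rewrite invr_gt0.
set f := fun j => absK (a j) `^ s.
have f0 j : 0 <= f j by exact: powR_ge0.
have [N hN] := series_tail_le f0 ha (divr_gt0 (divr_gt0 e0 (ltr0n _ 2)) c0).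
exists N => y hy n m Nn.
have young j : absK (a j) * absK (y j) ^+ d <= c * f j + l `^ p / p * absK (y j) `^ r.
  have := young_scaled s0 p0 sp l0 (absK_ge0 (a j)) (exprn_ge0 d (absK_ge0 (y j))).
  by rewrite -powR_mulrn ?absK_ge0 // -powRrM [_ * p]mulrC divfK ?gt_eqF.
apply: le_trans (ler_sum _ (fun j _ => young j)) _.
rewrite big_split /= -!mulr_sumr [e]splitr; apply: lerD.
  by rewrite mulrC -ler_pdivlMr //; exact: hN.
rewrite -lM; apply: ler_wpM2l; first by rewrite divr_ge0 ?powR_ge0 ?(ltW p0).
apply: le_trans (hy m); apply: sum_nat_le_sum_ord => j; exact: powR_ge0.
Qed.

Lemma small_tails_dual q M d (a : nat -> K) : 0 < M -> (0 < d)%N -> (d%:R%:E < q)%E ->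
  lp_mem absK (dual_exp q d) a -> small_tails q M d a.
Proof.
case: q => [r||] // M0 d0; rewrite ?lte_fin => dq.
  exact: small_tails_fin.
exact: small_tails_pinfty.
Qed.

Definition close_on (N : nat) (eta : R) (y x : nat -> K) : Prop :=
  forall j, (j < N)%N -> absK (y j - x j) < eta.

Lemma close_onW N1 N2 eta1 eta2 y x : (N1 <= N2)%N -> eta2 <= eta1 ->
  close_on N2 eta2 y x -> close_on N1 eta1 y x.
Proof. by move=> N12 eta21 h j jN; apply: lt_le_trans eta21; apply/h/(leq_trans jN). Qed.

Lemma close_on_max N1 N2 eta1 eta2 y x :
  close_on (maxn N1 N2) (Order.min eta1 eta2) y x ->
  close_on N1 eta1 y x /\ close_on N2 eta2 y x.
Proof.
by move=> h; split; apply: close_onW h; rewrite ?leq_maxl ?leq_maxr ?ge_min ?lexx ?orbT.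
Qed.

Lemma sum_powR_close r (x : nat -> K) n e : 0 < r -> 0 < e ->
  exists eta, 0 < eta /\ forall y, close_on n eta y x ->
    `|\sum_(j < n) absK (y j) `^ r - \sum_(j < n) absK (x j) `^ r| < e.
Proof.
move=> r0; elim: n e => [|n IH] e e0.
  by exists 1; split=> // y _; rewrite !big_ord0 subrr normr0.
have e2 : 0 < e / 2 by rewrite divr_gt0.
have [eta1 [eta10 h1]] := IH _ e2.
have [eta2 [eta20 h2]] := powR_close r0 (absK_ge0 (x n)) e2.
exists (Order.min eta1 eta2); split; first by rewrite lt_min eta10 eta20.
move=> y hy; rewrite !big_ord_recr /= opprD addrACA.
apply: le_lt_trans (ler_normD _ _) _; rewrite [e]splitr ltrD //.
  by apply: h1; apply: close_onW hy; rewrite ?leqnSn ?ge_min ?lexx.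
apply: h2; first exact: absK_ge0.
apply: le_lt_trans (ler_dist_absK _ _) _.
by apply: lt_le_trans (hy n (ltnSn n)) _; rewrite ge_min lexx orbT.
Qed.

Definition ball_continuous_at (q : \bar R) (M : R) (f : (nat -> K) -> K) (x : nat -> K) :=
  forall e, 0 < e -> exists N eta, 0 < eta /\
    forall y, lp_ball q M y -> close_on N eta y x -> absK (f y - f x) <= e.

Section BallContinuity.
Variables (q : \bar R) (M : R) (x : nat -> K).
Local Notation continuous_at f := (ball_continuous_at q M f x).

Lemma ball_continuous_ext f g : f =1 g -> continuous_at f -> continuous_at g.
Proof.
move=> fg hf e e0; have [N [eta [eta0 h]]] := hf e e0.
by exists N, eta; split=> // y hy hc; rewrite -!fg; exact: h.
Qed.

Lemma ball_continuous_cst c : continuous_at (fun=> c).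
Proof. by move=> e e0; exists 0%N, 1; split=> // y _ _; rewrite subrr absK0 ltW. Qed.

Lemma ball_continuous_add f g : continuous_at f -> continuous_at g ->
  continuous_at (fun y => f y + g y).
Proof.
move=> hf hg e e0; have e2 : 0 < e / 2 by rewrite divr_gt0.
have [N1 [eta1 [eta10 h1]]] := hf _ e2; have [N2 [eta2 [eta20 h2]]] := hg _ e2.
exists (maxn N1 N2), (Order.min eta1 eta2); split; first by rewrite lt_min eta10 eta20.
move=> y hy /close_on_max[c1 c2].
rewrite opprD addrACA; apply: le_trans (absKD _ _) _.
by rewrite [e]splitr lerD ?h1 ?h2.
Qed.

Lemma ball_continuous_mul f g : continuous_at f -> continuous_at g ->
  continuous_at (fun y => f y * g y).
Proof.
move=> hf hg e e0; set A := absK (f x); set B := absK (g x).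
have A1 : 0 < A + 1 by rewrite ltr_wpDl ?absK_ge0.
have B1 : 0 < B + 1 by rewrite ltr_wpDl ?absK_ge0.
have eg : 0 < e / 2 / (A + 1) by rewrite !divr_gt0.
have ef : 0 < Order.min 1 (e / 2 / (B + 1)) by rewrite lt_min ltr01 !divr_gt0.
have [N1 [eta1 [eta10 h1]]] := hf _ ef; have [N2 [eta2 [eta20 h2]]] := hg _ eg.
exists (maxn N1 N2), (Order.min eta1 eta2); split; first by rewrite lt_min eta10 eta20.
move=> y hy /close_on_max[c1 c2].
have := h1 y hy c1; rewrite le_min => /andP[df1 df2].
have hfy : absK (f y) <= A + 1.
  by rewrite -[f y](subrK (f x)) addrC; apply: le_trans (absKD _ _) _; rewrite lerD2l.
have -> : f y * g y - f x * g x = f y * (g y - g x) + g x * (f y - f x) by ring.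
apply: le_trans (absKD _ _) _; rewrite !absKM [e]splitr; apply: lerD.
  apply: le_trans (ler_pM (absK_ge0 _) (absK_ge0 _) hfy (h2 y hy c2)) _.
  by rewrite mulrC divfK ?gt_eqF.
apply: le_trans (ler_wpM2l (absK_ge0 _) df2) _.
rewrite mulrA ler_pdivrMr // mulrC ler_pM2l ?divr_gt0 // lerDl //.
Qed.

Lemma ball_continuous_big (I : Type) (r : seq I) (P : pred I) (op : K -> K -> K)
    (idx : K) (F : I -> (nat -> K) -> K) :
  (forall f g, continuous_at f -> continuous_at g -> continuous_at (fun y => op (f y) (g y))) ->
  (forall i, P i -> continuous_at (F i)) ->
  continuous_at (fun y => \big[op/idx]_(i <- r | P i) F i y).
Proof.
move=> hop hF; elim: r => [|i r IH].
  by apply: ball_continuous_ext (ball_continuous_cst idx) => y; rewrite big_nil.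
case Pi: (P i); last by apply: ball_continuous_ext IH => y; rewrite big_cons Pi.
apply: ball_continuous_ext (hop _ _ (hF i Pi) IH) => y.
by rewrite big_cons Pi.
Qed.

End BallContinuity.

Section Complete.
Hypothesis Kseries_cvg : forall u, Kseries_cauchy absK u -> exists l, Kseries_to absK u l.

Section Pairing.
Variables (q : \bar R) (M : R) (d : nat) (a : nat -> K).
Hypotheses (M_gt0 : 0 < M) (d_gt0 : (0 < d)%N) (dq : (d%:R%:E < q)%E).
Hypothesis a_lp : lp_mem absK (dual_exp q d) a.

Lemma absK_sum_pairing_le y n m : absK (\sum_(n <= j < m) a j * y j ^+ d) <=
  \sum_(n <= j < m) absK (a j) * absK (y j) ^+ d.
Proof. by apply: le_trans (absK_sum _ _ _) _; apply: ler_sum => j _; rewrite absKM absKX. Qed.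

Lemma pairing_approx e : 0 < e -> exists N, forall y, lp_ball q M y ->
  absK (pairing absK a y d - \sum_(j < N) a j * y j ^+ d) <= e.
Proof.
have tail := small_tails_dual M_gt0 d_gt0 dq a_lp.
move=> e0; have [N hN] := tail e e0; exists N => y hy.
set u := fun j => a j * y j ^+ d.
have /xgetPex hP : exists l, Kseries_to absK u l.
  apply: Kseries_cvg => e' e'0; have [N' hN'] := tail e' e'0.
  by exists N' => n m Nn; apply: le_trans (absK_sum_pairing_le _ _ _) _; exact: hN'.
apply/ler_addgt0Pl => e' e'0; have [N' hN'] := hP 0 e' e'0.
set n := maxn N N'.
have h1 : absK (\sum_(j < n) u j - pairing absK a y d) < e' by apply: hN'; rewrite leq_maxr.
have h2 : absK (\sum_(N <= j < n) u j) <= e.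
  by apply: le_trans (absK_sum_pairing_le _ _ _) _; apply: hN.
have split_n : \sum_(j < n) u j = \sum_(j < N) u j + \sum_(N <= j < n) u j.
  by rewrite -!(big_mkord xpredT) (@big_cat_nat _ _ _ N 0 n) ?leq_maxl.
have -> : pairing absK a y d - \sum_(j < N) u j =
    - (\sum_(j < n) u j - pairing absK a y d) + \sum_(N <= j < n) u j.
  by rewrite split_n; ring.
by apply: le_trans (absKD _ _) _; rewrite absKN lerD ?(ltW h1).
Qed.

Lemma ball_continuous_pairing x : lp_ball q M x ->
  ball_continuous_at q M (fun y => pairing absK a y d) x.
Proof.
move=> hx e e0; have q_gt0 := lte_natr_gt0 dq.
have e3 : 0 < e / 3 by rewrite divr_gt0.
have [N hN] := pairing_approx e3.
set C := \sum_(j < N) absK (a j) * (d%:R * M ^+ d.-1).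
have C0 : 0 <= C by apply: sumr_ge0 => j _; rewrite !mulr_ge0 ?absK_ge0 ?ler0n ?exprn_ge0 ?ltW.
exists N, (e / 3 / (C + 1)); split; first by rewrite !divr_gt0 ?ltr_wpDl.
move=> y hy hc; set Sy := \sum_(j < N) a j * y j ^+ d; set Sx := \sum_(j < N) a j * x j ^+ d.
have hS : absK (Sy - Sx) <= e / 3.
  rewrite -sumrB; apply: le_trans (absK_sum _ _ _) _.
  apply: (@le_trans _ _ (C * (e / 3 / (C + 1)))).
    rewrite mulr_suml; apply: ler_sum => j _; rewrite -mulrBr absKM -mulrA.
    apply: ler_wpM2l; first exact: absK_ge0.
    apply: le_trans (absK_subX d (lp_ball_le q_gt0 M_gt0 j hx) (lp_ball_le q_gt0 M_gt0 j hy)) _.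
    by apply: ler_wpM2l; rewrite ?mulr_ge0 ?exprn_ge0 ?(ltW M_gt0) // ltW ?hc.
  by rewrite mulrA ler_pdivrMr ?ltr_wpDl // mulrC ler_pM2l // lerDl.
have -> : pairing absK a y d - pairing absK a x d =
    (pairing absK a y d - Sy) + (Sy - Sx) - (pairing absK a x d - Sx) by ring.
apply: le_trans (absKB _ _) _; apply: le_trans (lerD (absKD _ _) (lexx _)) _.
by apply: le_trans (lerD (lerD (hN y hy) hS) (hN x hx)) _; lra.
Qed.

End Pairing.

Lemma ball_continuous_mult_poly q M D (a : nat -> nat -> K) x : 0 < M -> (D%:R%:E < q)%E ->
  (forall d, (1 <= d <= D)%N -> lp_mem absK (dual_exp q d) (a d)) ->
  lp_ball q M x -> ball_continuous_at q M (mult_poly absK D a) x.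
Proof.
move=> M0 Dq ha hx; apply: ball_continuous_big => [f g|k _]; first exact: ball_continuous_add.
apply: ball_continuous_big => [f g|t /andP[/forallP t_gt0 tD]]; first exact: ball_continuous_add.
apply: ball_continuous_big => [f g|l _]; first exact: ball_continuous_mul.
have tlD : (t l <= D)%N by rewrite -ltnS ltn_ord.
have tl_gt0 := t_gt0 l.
apply: ball_continuous_pairing => //; last by apply: ha; rewrite tl_gt0 tlD.
by apply: le_lt_trans Dq; rewrite lee_fin ler_nat.
Qed.

End Complete.

Section Coordinates.
Variables (re im : K -> R) (mk : R -> R -> K).
Hypothesis mkK : forall z, mk (re z) (im z) = z.
Hypothesis mkD : forall u v u' v', mk u v + mk u' v' = mk (u + u') (v + v').
Hypotheses (reD : {morph re : z w / z + w}) (imD : {morph im : z w / z + w}).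
Hypothesis absK_mk : forall u v, absK (mk u v) <= `|u| + `|v|.
Hypotheses (norm_re_le : forall z, `|re z| <= absK z) (norm_im_le : forall z, `|im z| <= absK z).

Lemma mkB u v u' v' : mk u v - mk u' v' = mk (u - u') (v - v').
Proof. by apply: (addIr (mk u' v')); rewrite subrK mkD !subrK. Qed.

Lemma Kseries_cauchy_cvg u : Kseries_cauchy absK u -> exists l, Kseries_to absK u l.
Proof.
move=> hu; have coord_cvg (c : K -> R) : {morph c : z w / z + w} ->
    (forall z, `|c z| <= absK z) -> exists l, Kseries_to (fun x : R => `|x|) (c \o u) l.
  move=> cD hc; apply: real_series_cauchy_cvg => e e0; have [N hN] := hu e e0.
  by exists N => n m Nn; rewrite -morph_sum //; apply: le_trans (hc _) (hN n m Nn).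
have [l1 h1] := coord_cvg re reD norm_re_le; have [l2 h2] := coord_cvg im imD norm_im_le.
exists (mk l1 l2) => e e0; have e2 : 0 < e / 2 by rewrite divr_gt0.
have [N1 hN1] := h1 _ e2; have [N2 hN2] := h2 _ e2.
exists (maxn N1 N2) => n; rewrite geq_max => /andP[n1 n2].
rewrite -[\sum_(j < n) u j]mkK mkB !(morph_sum reD, morph_sum imD).
by apply: le_lt_trans (absK_mk _ _) _; rewrite [e]splitr ltrD ?hN1 ?hN2.
Qed.

Local Open Scope classical_set_scope.

Let T := {ptws (nat * bool) -> R}.

Let X (t : T) : nat -> K := fun j => mk (t (j, false)) (t (j, true)).

Lemma coord_near (t0 : T) k e : 0 < e -> \forall t \near t0, `|t0 k - t k| < e.
Proof.
move=> e0; have coord_cvg : (fun t : T => t k) @ nbhs t0 --> t0 k.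
  by move: k; apply/pointwise_cvgP.
exact: cvgr_dist_lt _ _ coord_cvg _ e0.
Qed.

Lemma close_on_near (t0 : T) N eta : 0 < eta -> \forall t \near t0, close_on N eta (X t) (X t0).
Proof.
move=> eta0; have eta2 : 0 < eta / 2 by rewrite divr_gt0.
have FT : Filter (nbhs t0) by exact: prod_topology_filter.
elim: N => [|N IH]; first by apply: (@nearW _ _ _ FT) => t j.
have := @filterI _ _ FT _ _ IH
  (@filterI _ _ FT _ _ (coord_near t0 (N, false) eta2) (coord_near t0 (N, true) eta2)).
apply: (@filterS _ _ FT) => t [hI [h1 h2]] j.
rewrite ltnS leq_eqVlt => /orP[/eqP ->|jN]; last exact: hI.
rewrite /X mkB; apply: le_lt_trans (absK_mk _ _) _.
by rewrite [eta]splitr ltrD // distrC.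
Qed.

Lemma cube_compact M : compact [set t : T | forall k, `[-M, M] (t k)].
Proof. exact: tychonoff (fun _ => @segment_compact R (- M) M). Qed.

Section Solution.
Variables (D : nat) (q : \bar R) (I : Type) (a : I -> nat -> nat -> K) (b : I -> K) (M : R).
Hypotheses (M_gt0 : 0 < M) (Dq : (D%:R%:E < q)%E).
Hypothesis a_lp : forall i d, (1 <= d <= D)%N -> lp_mem absK (dual_exp q d) (a i d).

Definition approx_solutions (S : set I) (e : R) : set T :=
  [set t | (forall k, `[-M, M] (t k)) /\ lp_ball q M (X t) /\
           forall i, S i -> absK (mult_poly absK D (a i) (X t) - b i) <= e].

Definition approx_filter : set_system T :=
  filter_from [set p : set I * R | finite_set p.1 /\ 0 < p.2]
    (fun p => approx_solutions p.1 p.2).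

Lemma approx_filter_filter : Filter approx_filter.
Proof.
apply: filter_from_filter; first by exists (set0, 1); split; [exact: finite_set0 | exact: ltr01].
move=> [S1 e1] [S2 e2] [fS1 e10] [fS2 e20]; exists (S1 `|` S2, Order.min e1 e2).
  by split; [rewrite finite_setU | rewrite /= lt_min e10 e20].
move=> t [hB [hb hP]]; split; (split; [done | split; [done |]]) => i Si;
  (apply: le_trans (hP i _) _; [by [left | right] | by rewrite ge_min lexx ?orbT]).
Qed.

Lemma approx_filter_proper :
  (forall e S, 0 < e -> finite_set S -> exists x, lp_mem absK q x /\ lp_norm absK q x <= M /\
     forall i, S i -> absK (mult_poly absK D (a i) x - b i) <= e) ->
  ProperFilter approx_filter.
Proof.
move=> solvable; apply: filter_from_proper approx_filter_filter _ => -[S e] [fS e0].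
have [x [hx [hn hP]]] := solvable e S e0 fS.
have q0 := lte_natr_gt0 Dq; have hxb := lp_ball_lp_norm q0 M_gt0 hx hn.
pose t : T := fun k => if k.2 then im (x k.1) else re (x k.1).
have Xt : X t = x by apply/funext => j; rewrite /X /t /= mkK.
exists t; split; last by rewrite Xt.
move=> [j []]; rewrite /= in_itv /= -ler_norml; apply: le_trans (lp_ball_le q0 M_gt0 j hxb).
  exact: norm_im_le.
exact: norm_re_le.
Qed.

Lemma cluster_near t0 S e N eta : cluster approx_filter t0 ->
  finite_set S -> 0 < e -> 0 < eta ->
  exists t, approx_solutions S e t /\ close_on N eta (X t) (X t0).
Proof.
move=> cl fS e0 eta0.
have F_sol : approx_filter (approx_solutions S e) by exists (S, e).
by have [t [At Bt]] := cl _ _ F_sol (close_on_near t0 N eta0); exists t.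
Qed.

Lemma cluster_lp_ball t0 : cluster approx_filter t0 -> lp_ball q M (X t0).
Proof.
move=> cl.
have sol N eta : 0 < eta -> exists t, approx_solutions set0 1 t /\ close_on N eta (X t) (X t0).
  exact: (cluster_near N cl (finite_set0 _) ltr01).
case E: q Dq => [r||] //= _; last first.
  move=> j; apply/ler_addgt0Pr => e e0.
  have [t [[_ [hb _]] ht]] := sol j.+1 e e0; rewrite E /= in hb.
  rewrite -[X t0 j](subrK (X t j)) addrC; apply: le_trans (absKD _ _) _.
  by rewrite lerD ?hb // -absK_distC ltW ?ht.
have r0 : 0 < r by rewrite -lte_fin -E (lte_natr_gt0 Dq).
move=> n; apply/ler_addgt0Pr => e e0.
have [eta [eta0 heta]] := sum_powR_close (X t0) n r0 e0.
have [t [[_ [hb _]] ht]] := sol n eta eta0; rewrite E /= in hb.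
have := heta _ ht; have := hb n; rewrite ltr_distlC => ? /andP[? ?]; lra.
Qed.

Lemma cluster_solves t0 i : cluster approx_filter t0 ->
  mult_poly absK D (a i) (X t0) = b i.
Proof.
move=> cl; have hx := cluster_lp_ball cl.
apply/eqP; rewrite -subr_eq0; apply/eqP/absK_eq0/eqP; rewrite eq_le absK_ge0 andbT.
apply/ler_addgt0Pr => e e0; rewrite add0r; have e2 : 0 < e / 2 by rewrite divr_gt0.
have [N [eta [eta0 hP]]] :=
  ball_continuous_mult_poly Kseries_cauchy_cvg M_gt0 Dq (a_lp i) hx e2.
have [t [[_ [ht t_sol]] hc]] := cluster_near N cl (finite_set1 i) e2 eta0.
have -> : mult_poly absK D (a i) (X t0) - b i = (mult_poly absK D (a i) (X t) - b i)
    - (mult_poly absK D (a i) (X t) - mult_poly absK D (a i) (X t0)) by ring.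
by apply: le_trans (absKB _ _) _; rewrite [e]splitr lerD ?t_sol ?hP.
Qed.

End Solution.

Theorem theorem4_of_coordinates : theorem4_stmt absK.
Proof.
move=> D q I a b M _ Dq _ a_lp M0 solvable.
have F_proper := approx_filter_proper M0 Dq solvable.
have cube_in_F : approx_filter D q a b M [set t | forall k, `[-M, M] (t k)].
  by exists (set0, 1); [split; [exact: finite_set0 | exact: ltr01] | move=> t []].
have [t0 [_ cl]] := cube_compact F_proper cube_in_F.
exists (X t0); have [X_lp X_norm] := lp_ballP (lte_natr_gt0 Dq) M0 (cluster_lp_ball Dq cl).
by split=> //; split=> // i; exact: (cluster_solves M0 Dq a_lp i cl).
Qed.

End Coordinates.

End AbsoluteValue.

Lemma theorem4_real (R : realType) : theorem4_stmt (fun x : R => `|x|).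
Proof.
apply: (@theorem4_of_coordinates _ _ _ _ _ _ _ _ id (fun=> 0) (fun u _ => u)) => //.
- exact: normr0.
- by move=> x /normr0_eq0.
- exact: ler_normD.
- exact: normrM.
- exact: normrN.
- by move=> x y; rewrite addr0.
- by move=> u v; rewrite lerDl.
- by move=> z; rewrite normr0.
Qed.

Section Complex.
Variable R : realType.
Local Open Scope complex_scope.
Implicit Types (u v : R) (z w : R[i]).

Lemma Re_normcE z : complex.Re `|z| = Num.sqrt (complex.Re z ^+ 2 + complex.Im z ^+ 2).
Proof. by rewrite normc_def. Qed.

Lemma Re_normc_eq0 z : complex.Re `|z| = 0 -> z = 0.
Proof. by move=> h; apply/normr0_eq0; rewrite normc_def -Re_normcE h. Qed.

Lemma Re_normcD z w : complex.Re `|z + w| <= complex.Re `|z| + complex.Re `|w|.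
Proof. by have := ler_normD z w; rewrite lecE => /andP[_]; rewrite !normc_def. Qed.

Lemma Re_normcM z w : complex.Re `|z * w| = complex.Re `|z| * complex.Re `|w|.
Proof. by rewrite normrM !normc_def /= mulr0 subr0. Qed.

Lemma Re_normc_le u v : complex.Re `|u +i* v| <= `|u| + `|v|.
Proof.
rewrite Re_normcE /= -(ger0_norm (addr_ge0 (normr_ge0 u) (normr_ge0 v))) -sqrtr_sqr.
rewrite ler_sqrt ?sqr_ge0 // sqrrD !real_normK ?num_real //.
by rewrite -addrA [_ *+ 2 + _]addrC addrA lerDl mulrn_wge0 // mulr_ge0.
Qed.

Lemma norm_Re_le z : `|complex.Re z| <= complex.Re `|z|.
Proof. by rewrite Re_normcE -sqrtr_sqr ler_sqrt ?addr_ge0 ?sqr_ge0 // lerDl sqr_ge0. Qed.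

Lemma norm_Im_le z : `|complex.Im z| <= complex.Re `|z|.
Proof. by rewrite Re_normcE -sqrtr_sqr ler_sqrt ?addr_ge0 ?sqr_ge0 // lerDr sqr_ge0. Qed.

Lemma theorem4_complex : theorem4_stmt (fun z : R[i] => complex.Re `|z|).
Proof.
apply: (@theorem4_of_coordinates _ _ _ _ _ _ _ _
  (fun z => complex.Re z) (fun z => complex.Im z) (fun u v => u +i* v)) => //.
- by rewrite normr0.
- exact: Re_normc_eq0.
- exact: Re_normcD.
- exact: Re_normcM.
- by move=> z; rewrite normrN.
- by case.
- by case=> ? ? [].
- by case=> ? ? [].
- exact: Re_normc_le.
- exact: norm_Re_le.
- exact: norm_Im_le.
Qed.

End Complex.

Theorem theorem4 (R : realType) :
  theorem4_stmt (fun x : R => `|x|) /\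
  theorem4_stmt (fun z : R[i] => complex.Re `|z|).
Proof. by split; [exact: theorem4_real | exact: theorem4_complex]. Qed.
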